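(* Assume $P_S(s)>0$ for all $s$ and $P_{Y|X}(y|x)>0$ for all $x,y$, and let $f:(0,\infty)\to\mathbb R$ be continuously differentiable with the saddle property. Let $Q\in\mathcal Q$, put $a(\hat s|s)=Q_{S,\widehat S}(s,\hat s)/P_S(s)$ and $b=Q_X$, and assume $a(\hat s|s)>0$ for all $s,\hat s$. Let $\lambda\ge0$ satisfy $\lambda\big(\Psi(b)-\Phi(a)\big)=0$, let $\mu^b\in\mathbb R$, $\mu^a:\mathcal S\to\mathbb R$ be arbitrary, and let $\nu^b:\mathcal X\to[0,\infty)$ satisfy $\sum_x\nu^b(x)b(x)=0$. Define $$\delta(s,\hat s)=-\frac{\lambda}{P_S(s)}\frac{\partial\Phi}{\partial a(\hat s|s)}(a)+\mu^a(s),\qquad \rho(x)=\lambda\frac{\partial\Psi}{\partial b(x)}(b)+\mu^b+\nu^b(x).$$ Then $Q$ minimizes $Q'\mapsto\sum_{(s,x,y,\hat s)\in\mathcal Z}Q'(s,x,y,\hat s)\big(\delta(s,\hat s)+\rho(x)\big)$ over $Q'\in\mathcal Q$.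
   Context: $\mathcal S,\mathcal X,\mathcal Y,\widehat{\mathcal S}$ are finite nonempty sets, $\mathcal Z=\mathcal S\times\mathcal X\times\mathcal Y\times\widehat{\mathcal S}$, $P_S$ a fixed pmf on $\mathcal S$, $P_{Y|X}$ a fixed channel from $\mathcal X$ to $\mathcal Y$. $\mathcal Q$ is the set of pmfs on $\mathcal Z$ of the form $Q(s,x,y,\hat s)=P_S(s)Q_{X|S}(x|s)P_{Y|X}(y|x)Q_{\widehat S|Y}(\hat s|y)$ for some kernels $Q_{X|S}$, $Q_{\widehat S|Y}$; $Q_X$, $Q_{S,\widehat S}$ denote marginals. For $a\in(0,\infty)^{\mathcal S\times\widehat{\mathcal S}}$ let $\bar a(\hat s)=\sum_{s'}a(\hat s|s')P_S(s')$ and $\Phi(a)=\sum_{s,\hat s}a(\hat s|s)P_S(s)f\big(\bar a(\hat s)/a(\hat s|s)\big)$. For $b\in\mathbb R^{\mathcal X}$ with $b_Y(y):=\sum_{x'}P_{Y|X}(y|x')b(x')>0$ for all $y$, let $\Psi(b)=\sum_{x,y}b(x)P_{Y|X}(y|x)f\big(b_Y(y)/P_{Y|X}(y|x)\big)$. (On kernels/pmfs these equal the $f$-mutual informations of $(s,\hat s)\mapsto a(\hat s|s)P_S(s)$ and $(x,y)\mapsto b(x)P_{Y|X}(y|x)$.) $f$-mutual information: for $f$ convex on $(0,\infty)$, $f'(\infty)=\lim_{t\to\infty}f(t)/t$, and for a joint pmf $p(u,v)$ on a finite product set, $I_f(p)=\sum_{u,v}\phi(u,v)$ with $\phi=p(u,v)f(p(u)p(v)/p(u,v))$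 if $p(u,v)>0$, $\phi=p(u)p(v)f'(\infty)$ if $p(u,v)=0<p(u)p(v)$, $\phi=0$ if $p(u)p(v)=0$. $f$ has the saddle property if $f$ is convex on $(0,\infty)$ and, for all finite sets $\mathcal U,\mathcal V$ and every kernel $p(v|u)$, $p_U\mapsto I_f(p_U(u)p(v|u))$ is concave on the pmfs on $\mathcal U$. *)

From HB Require Import structures.
From mathcomp Require Import all_boot.
From Stdlib Require Import Reals ClassicalEpsilon.

Set Implicit Arguments.
Unset Strict Implicit.
Unset Printing Implicit Defensive.

Local Open Scope R_scope.

Definition rsum (T : finType) (F : T -> R) : R := \big[Rplus/0]_(i : T) F i.

Definition is_pmf (A : finType) (p : A -> R) : Prop :=
  (forall a, 0 <= p a) /\ rsum p = 1.

Definition is_kernel (A B : finType) (k : A -> B -> R) : Prop :=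
  (forall a b, 0 <= k a b) /\ (forall a, rsum (fun b => k a b) = 1).

(* Extended reals (-oo excluded; only +oo is needed). *)
Inductive xR := Fin of R | PInf.

Definition xadd (x y : xR) : xR :=
  match x, y with Fin a, Fin b => Fin (a + b) | _, _ => PInf end.

(* scaling by a nonnegative real, convention 0 * (+oo) = 0 *)
Definition xscale (t : R) (x : xR) : xR :=
  match x with
  | Fin a => Fin (t * a)
  | PInf => if Req_EM_T t 0 then Fin 0 else PInf
  end.

Definition xle (x y : xR) : Prop :=
  match x, y with
  | Fin a, Fin b => a <= b
  | _, PInf => True
  | PInf, Fin _ => False
  end.

Definition xsum (T : finType) (F : T -> xR) : xR := \big[xadd/Fin 0]_(i : T) F i.

Definition slope_inf (f : R -> R) (e : xR) : Prop :=
  match e with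
  | Fin L => forall eps, 0 < eps -> exists M, forall t, M < t -> Rabs (f t / t - L) < eps
  | PInf => forall K, exists M, forall t, M < t -> K < f t / t
  end.

(* f'(oo) := lim_{t -> oo} f(t)/t  (exists in (-oo,+oo] for convex f) *)
Definition fprime_inf (f : R -> R) : xR :=
  epsilon (inhabits PInf) (fun e => slope_inf f e).

Definition convex_pos (f : R -> R) : Prop :=
  forall x y t, 0 < x -> 0 < y -> 0 <= t <= 1 ->
    f (t * x + (1 - t) * y) <= t * f x + (1 - t) * f y.

Definition If (f : R -> R) (U V : finType) (p : U -> V -> R) : xR :=
  let pU := fun u => rsum (fun v => p u v) in
  let pV := fun v => rsum (fun u => p u v) in
  xsum (fun u : U => xsum (fun v : V =>
    if Rlt_dec 0 (p u v) then Fin (p u v * f (pU u * pV v / p u v))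
    else if Rlt_dec 0 (pU u * pV v) then xscale (pU u * pV v) (fprime_inf f)
    else Fin 0)).

Definition saddle_property (f : R -> R) : Prop :=
  convex_pos f /\
  forall (U V : finType) (k : U -> V -> R), is_kernel k ->
    forall (p q : U -> R) (t : R), is_pmf p -> is_pmf q -> 0 <= t <= 1 ->
      xle (xadd (xscale t (If f (fun u v => p u * k u v)))
                (xscale (1 - t) (If f (fun u v => q u * k u v))))
          (If f (fun u v => (t * p u + (1 - t) * q u) * k u v)).

Definition C1_pos (f : R -> R) : Prop :=
  exists f' : R -> R, forall t, 0 < t -> derivable_pt_lim f t (f' t) /\ continuity_pt f' t.

Definition Qjoint (S X Y Sh : finType) (PS : S -> R) (W : X -> Y -> R)
  (QXS : S -> X -> R) (QSY : Y -> Sh -> R) (s : S) (x : X) (y : Y) (sh : Sh) : R :=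
  PS s * QXS s x * W x y * QSY y sh.

Definition Phi (f : R -> R) (S Sh : finType) (PS : S -> R) (a : S -> Sh -> R) : R :=
  let abar := fun sh => rsum (fun s' => a s' sh * PS s') in
  rsum (fun s => rsum (fun sh => a s sh * PS s * f (abar sh / a s sh))).

Definition Psi (f : R -> R) (X Y : finType) (W : X -> Y -> R) (b : X -> R) : R :=
  let bY := fun y => rsum (fun x' => W x' y * b x') in
  rsum (fun x => rsum (fun y => b x * W x y * f (bY y / W x y))).

Definition upd2 (A B : finType) (a : A -> B -> R) (i : A) (j : B) (t : R) : A -> B -> R :=
  fun i' j' => if (i' == i) && (j' == j) then t else a i' j'.

Definition upd1 (A : finType) (b : A -> R) (i : A) (t : R) : A -> R :=
  fun i' => if i' == i then t else b i'.

(* The objective is affine in a competitor [Q'] and only sees it through its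
   reconstruction kernel [a'] and its input law [b']:
     obj(Q') = lam (<b', dPsi> - <a', dPhi>) + <nu, b'> + const.
   Three inequalities compare [Q'] with [Q]:
   - [Psi] is concave on input laws (saddle property), so
       Psi(b') - Psi(b) <= <b' - b, dPsi>;
   - [Phi] is a sum of perspectives (A, M) |-> A f(M/A) with (A, M) linear
     in [a], hence <a' - a, dPhi> <= Phi(a') - Phi(a);
   - data processing (Jensen's inequality): Phi(a') <= Psi(b').
   With lam (Psi(b) - Phi(a)) = 0 and <nu, b> = 0 this yields
     obj(Q') - obj(Q) >= lam (Psi(b') - Phi(a')) + <nu, b'> >= 0.
   The partial derivatives [dPhi], [dPsi] are identified with explicit
   gradients by differentiating [Phi] and [Psi] along lines (f is C^1). *)

From HB Require Import structures.
From mathcomp Require Import all_boot.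
From Stdlib Require Import Reals Lra FunctionalExtensionality Classical.
Set Warnings "-notation-overridden,-redundant-canonical-projection".
Local Open Scope R_scope.

Lemma Rplus_associative : associative Rplus.
Proof. by move=> x y z; ring. Qed.

HB.instance Definition _ :=
  Monoid.isComLaw.Build R 0 Rplus Rplus_associative Rplus_comm Rplus_0_l.

(** * Finite sums of reals *)

Section FiniteSums.
Context {T : finType}.
Implicit Types F G : T -> R.

Lemma rsum_ext {F G} : (forall i, F i = G i) -> rsum F = rsum G.
Proof. by move=> H; rewrite /rsum; apply: eq_bigr => i _; exact: H. Qed.

Lemma rsumD F G : rsum (fun i => F i + G i) = rsum F + rsum G.
Proof. by rewrite /rsum big_split. Qed.

Lemma rsum0 : rsum (fun _ : T => 0) = 0.
Proof. by rewrite /rsum big1. Qed.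

Lemma rsumZ c F : rsum (fun i => c * F i) = c * rsum F.
Proof.
rewrite /rsum; apply: (big_rec2 (fun x y => x = c * y)); first by ring.
by move=> i y1 y2 _ ->; ring.
Qed.

Lemma rsumZr c F : rsum (fun i => F i * c) = rsum F * c.
Proof. by rewrite Rmult_comm -rsumZ; apply: rsum_ext => i; ring. Qed.

Lemma rsumB F G : rsum (fun i => F i - G i) = rsum F - rsum G.
Proof.
have -> : rsum F - rsum G = rsum F + (-1) * rsum G by ring.
by rewrite -rsumZ -rsumD; apply: rsum_ext => i; ring.
Qed.

Lemma rsum_le {F G} : (forall i, F i <= G i) -> rsum F <= rsum G.
Proof.
move=> H; rewrite /rsum; apply: (big_rec2 (fun x y => x <= y)); first lra.
by move=> i y1 y2 _ h; have := H i; lra.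
Qed.

Lemma rsum_ge0 {F} : (forall i, 0 <= F i) -> 0 <= rsum F.
Proof. by move=> H; rewrite -rsum0; exact: rsum_le. Qed.

Lemma rsum_term F j : (forall i, 0 <= F i) -> F j <= rsum F.
Proof.
move=> H; rewrite /rsum (bigD1 j) //=.
have : 0 <= \big[Rplus/0]_(i | i != j) F i.
  by apply: (big_rec (fun x => 0 <= x)) => [|i y _ h]; [lra | have := H i; lra].
lra.
Qed.

Lemma rsum_eq0 {F} : (forall i, 0 <= F i) -> rsum F = 0 -> forall i, F i = 0.
Proof. by move=> H E i; have := rsum_term F i H; have := H i; lra. Qed.

Lemma rsum_pos {F} j : (forall i, 0 <= F i) -> 0 < F j -> 0 < rsum F.
Proof. by move=> H h; have := rsum_term F j H; lra. Qed.

Lemma rsum_delta F (j : T) : rsum (fun i => (if i == j then 1 else 0) * F i) = F j.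
Proof.
rewrite /rsum (bigD1 j) //= eqxx big1 /=; first ring.
by move=> i /negPf ->; ring.
Qed.

Lemma pmf_exists_pos {p : T -> R} : is_pmf p -> exists i, 0 < p i.
Proof.
move=> [_ p1]; apply: NNPP => N.
have : rsum p <= rsum (fun _ : T => 0).
  by apply: rsum_le => i; apply: Rnot_lt_le => hi; apply: N; exists i.
by rewrite rsum0; lra.
Qed.

End FiniteSums.

Lemma rsum_exch (I J : finType) (F : I -> J -> R) :
  rsum (fun i => rsum (fun j => F i j)) = rsum (fun j => rsum (fun i => F i j)).
Proof. by rewrite /rsum exchange_big. Qed.

Lemma rsum_pair (I J : finType) (F : I -> J -> R) :
  rsum (fun i => rsum (fun j => F i j)) = rsum (fun p : I * J => F p.1 p.2).
Proof. by rewrite /rsum pair_big. Qed.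

(** * One-variable calculus *)

Lemma derivable_pt_lim_eq {g : R -> R} {x l l'} :
  derivable_pt_lim g x l -> l = l' -> derivable_pt_lim g x l'.
Proof. by move=> H <-. Qed.

Lemma derivable_pt_lim_rsum (T : finType) (F : T -> R -> R) (D : T -> R) t :
  (forall i, derivable_pt_lim (F i) t (D i)) ->
  derivable_pt_lim (fun u => rsum (fun i => F i u)) t (rsum D).
Proof.
move=> H; rewrite /rsum; elim: (index_enum T) => [|x r IH].
  apply: (derivable_pt_lim_ext (fun _ => 0)); first by move=> u; rewrite big_nil.
  by rewrite big_nil; exact: derivable_pt_lim_const.
apply: (derivable_pt_lim_ext (fun u => F x u + \big[Rplus/0]_(i <- r) F i u)).
  by move=> u; rewrite big_cons.
by rewrite big_cons; exact: derivable_pt_lim_plus.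
Qed.

Lemma derivable_pt_lim_affine c e t0 :
  derivable_pt_lim (fun t => c + (t - t0) * e) t0 e.
Proof.
apply: (derivable_pt_lim_eq (l := 0 + ((1 - 0) * e + (t0 - t0) * 0))); last by ring.
apply: (derivable_pt_lim_plus (fun _ => c)); first exact: derivable_pt_lim_const.
apply: (derivable_pt_lim_mult (fun t => t - t0) (fun _ => e));
  last exact: derivable_pt_lim_const.
apply: (derivable_pt_lim_minus id (fun _ => t0));
  [exact: derivable_pt_lim_id | exact: derivable_pt_lim_const].
Qed.

Lemma deriv_le_of_slopes {g : R -> R} {l K} :
  derivable_pt_lim g 0 l -> (forall h, 0 < h <= 1 -> g h - g 0 <= h * K) -> l <= K.
Proof.
move=> D H; apply: Rnot_lt_le => hlt.
have [delta Hd] := D (l - K) ltac:(lra).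
have dpos := cond_pos delta.
set h := Rmin (delta / 2) 1.
have hpos : 0 < h by apply: Rmin_pos; lra.
have hle1 : h <= 1 by apply: Rmin_r.
have hled : h <= delta / 2 by apply: Rmin_l.
have := Hd h ltac:(lra).
rewrite Rplus_0_l Rabs_pos_eq; last lra.
move=> /(_ ltac:(lra)).
set q := (g h - g 0) / h.
have slope : q <= K.
  have := H h (conj hpos hle1).
  have -> : g h - g 0 = q * h by rewrite /q; field; lra.
  nra.
have := Rle_abs (- (q - l)); rewrite Rabs_Ropp; lra.
Qed.

Lemma deriv_ge_of_slopes {g : R -> R} {l K} :
  derivable_pt_lim g 0 l -> (forall h, 0 < h <= 1 -> h * K <= g h - g 0) -> K <= l.
Proof.
move=> D H; suff : - l <= - K by lra.
apply: (deriv_le_of_slopes (g := fun h => - g h)); first exact: derivable_pt_lim_opp.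
by move=> h hh; have := H h hh; lra.
Qed.

(** * Convexity on the positive reals *)

Lemma convex_tangent (f : R -> R) x y l :
  convex_pos f -> derivable_pt_lim f x l -> 0 < x -> 0 < y ->
  f x + l * (y - x) <= f y.
Proof.
move=> Hc D hx hy; suff : l * (y - x) <= f y - f x by lra.
apply: (deriv_le_of_slopes (g := fun h => f (x + (h - 0) * (y - x)))).
  apply: (derivable_pt_lim_comp (fun h => x + (h - 0) * (y - x)));
    first exact: derivable_pt_lim_affine.
  by rewrite Rminus_diag Rmult_0_l Rplus_0_r.
move=> h hh; rewrite Rminus_diag Rmult_0_l Rplus_0_r Rminus_0_r.
have -> : x + h * (y - x) = h * y + (1 - h) * x by ring.
by have := Hc y x h hy hx ltac:(lra); lra.
Qed.

(* Admissible (mass, moment) pairs of the perspective [(C, M) |-> C f(M/C)]: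
   zero mass carries zero moment, positive mass a positive moment. *)
Definition admissible (C M : R) : Prop :=
  0 <= C /\ (C = 0 -> M = 0) /\ (0 < C -> 0 < M).

Lemma perspective_subadditive (f : R -> R) {C1 C2 M1 M2} :
  convex_pos f -> admissible C1 M1 -> admissible C2 M2 ->
  (C1 + C2) * f ((M1 + M2) / (C1 + C2)) <= C1 * f (M1 / C1) + C2 * f (M2 / C2).
Proof.
move=> Hc [h1 [e1 p1]] [h2 [e2 p2]].
case: (Req_dec C1 0) => [E1|N1].
  by rewrite E1 (e1 E1) !Rplus_0_l Rmult_0_l Rplus_0_l; lra.
case: (Req_dec C2 0) => [E2|N2].
  by rewrite E2 (e2 E2) !Rplus_0_r Rmult_0_l Rplus_0_r; lra.
have m1 := p1 ltac:(lra); have m2 := p2 ltac:(lra).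
set t := C1 / (C1 + C2).
have te : t * (C1 + C2) = C1 by rewrite /t; field; lra.
have ht : 0 <= t <= 1.
  have : 0 < t by apply: Rdiv_lt_0_compat; lra.
  by split; nra.
have Hx : 0 < M1 / C1 by apply: Rdiv_lt_0_compat; lra.
have Hy : 0 < M2 / C2 by apply: Rdiv_lt_0_compat; lra.
have := Hc (M1 / C1) (M2 / C2) t Hx Hy ht.
have -> : t * (M1 / C1) + (1 - t) * (M2 / C2) = (M1 + M2) / (C1 + C2)
  by rewrite /t; field; lra.
have -> : C1 * f (M1 / C1) + C2 * f (M2 / C2) =
   (C1 + C2) * (t * f (M1 / C1) + (1 - t) * f (M2 / C2)) by rewrite /t; field; lra.
by move=> H; apply: Rmult_le_compat_l; lra.
Qed.

Lemma jensen (f : R -> R) (T : finType) (c z : T -> R) :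
  convex_pos f -> (forall i, 0 <= c i) -> (forall i, 0 < z i) ->
  rsum c * f (rsum (fun i => c i * z i) / rsum c) <= rsum (fun i => c i * f (z i)).
Proof.
move=> Hc hc hz; rewrite /rsum.
suff : forall r : seq T,
  let C := \big[Rplus/0]_(i <- r) c i in
  let M := \big[Rplus/0]_(i <- r) (c i * z i) in
  admissible C M /\ C * f (M / C) <= \big[Rplus/0]_(i <- r) (c i * f (z i)).
  by move=> /(_ (index_enum T)) /= [].
elim=> [|i r [adm IH]] /=.
  by rewrite !big_nil Rmult_0_l; split; [split; [lra | split; lra] | lra].
rewrite !big_cons.
set C := \big[Rplus/0]_(j <- r) c j in adm IH *.
set M := \big[Rplus/0]_(j <- r) (c j * z j) in adm IH *.
have hi := hc i; have zi := hz i.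
have admi : admissible (c i) (c i * z i).
  by split; [lra | split; [move=> ->; ring | nra]].
have [C0 [CM CP]] := adm.
split.
  split; first lra; split.
    move=> E; have ci0 : c i = 0 by lra.
    by rewrite ci0 (CM ltac:(lra)); ring.
  move=> P; case: (Req_dec C 0) => [E|N]; last by have := CP ltac:(lra); nra.
  by rewrite (CM E) Rplus_0_r; nra.
apply: Rle_trans (perspective_subadditive f Hc admi adm) _.
have : c i * f (c i * z i / c i) = c i * f (z i).
  case: (Req_dec (c i) 0) => [->|N]; first ring.
  by congr (_ * f _); field.
lra.
Qed.

Lemma perspective_tangent (f f' : R -> R) A M A' M' :
  convex_pos f -> (forall t, 0 < t -> derivable_pt_lim f t (f' t)) ->
  0 < A -> 0 < M -> admissible A' M' ->
  let r := M / A in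
  (A' - A) * (f r - r * f' r) + f' r * (M' - M) <= A' * f (M' / A') - A * f r.
Proof.
move=> hc hd hA hM [hA' [e0 ep]] r.
have hr : 0 < r by apply: Rdiv_lt_0_compat.
have Mr : M = r * A by rewrite /r; field; lra.
case: (Rle_lt_or_eq_dec _ _ hA') => hA'0; last first.
  by rewrite -hA'0 (e0 (esym hA'0)) Mr; lra.
have hy : 0 < M' / A' by apply: Rdiv_lt_0_compat; [exact: ep | lra].
have T := convex_tangent f r (M' / A') (f' r) hc (hd _ hr) hr hy.
have E : (A' - A) * (f r - r * f' r) + f' r * (M' - M) - (A' * f (M' / A') - A * f r)
        = A' * (f r + f' r * (M' / A' - r) - f (M' / A')) by rewrite Mr; field; lra.
have : A' * (f r + f' r * (M' / A' - r) - f (M' / A')) <= 0.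
  by nra.
lra.
Qed.

(** * Directional derivatives of [Psi] and [Phi] *)

Definition line {A : Type} (b d : A -> R) (t0 t : R) : A -> R :=
  fun i => b i + (t - t0) * d i.

Definition line2 {A B : Type} (a d : A -> B -> R) (t0 t : R) : A -> B -> R :=
  fun i j => a i j + (t - t0) * d i j.

Lemma line_at {A : Type} (b d : A -> R) t0 : line b d t0 t0 = b.
Proof. by apply: functional_extensionality => i; rewrite /line; ring. Qed.

Lemma line2_at {A B : Type} (a d : A -> B -> R) t0 : line2 a d t0 t0 = a.
Proof.
apply: functional_extensionality => i; apply: functional_extensionality => j.
by rewrite /line2; ring.
Qed.

Section PsiGradient.
Context {X Y : finType} (W : X -> Y -> R) (hWpos : forall x y, 0 < W x y)
  (f f' : R -> R) (Hf' : forall t, 0 < t -> derivable_pt_lim f t (f' t)).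

Definition bY (b : X -> R) (y : Y) : R := rsum (fun x' => W x' y * b x').

(* Partial derivative of [Psi] with respect to the output mass [bY y]. *)
Definition Psi_dout (b : X -> R) (y : Y) : R :=
  rsum (fun x' => b x' * f' (bY b y / W x' y)).

Definition Psi_grad (b : X -> R) (x : X) : R :=
  rsum (fun y => W x y * f (bY b y / W x y) + W x y * Psi_dout b y).

Lemma Psi_line_deriv (b d : X -> R) t0 : (forall y, 0 < bY b y) ->
  derivable_pt_lim (fun t => Psi f W (line b d t0 t)) t0
    (rsum (fun x => d x * Psi_grad b x)).
Proof.
move=> hb; rewrite /Psi.
apply: derivable_pt_lim_eq.
  apply: derivable_pt_lim_rsum => x; apply: derivable_pt_lim_rsum => y.
  apply: derivable_pt_lim_mult.
    apply: derivable_pt_lim_mult; first exact: derivable_pt_lim_affine.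
    exact: derivable_pt_lim_const.
  apply: derivable_pt_lim_comp.
    apply: derivable_pt_lim_div; last exact: Rgt_not_eq.
      apply: derivable_pt_lim_rsum => x'.
      by apply: derivable_pt_lim_mult;
        [exact: derivable_pt_lim_const | exact: derivable_pt_lim_affine].
    exact: derivable_pt_lim_const.
  by rewrite /= line_at; apply: Hf'; apply: Rdiv_lt_0_compat; [exact: hb | exact: hWpos].
rewrite /= line_at.
pose DY y := rsum (fun x' => W x' y * d x').
have pointwise : forall x y,
    (d x * W x y + b x * 0) * f (bY b y / W x y) +
    b x * W x y * (f' (bY b y / W x y) *
      ((rsum (fun x' => 0 * b x' + W x' y * d x') * W x y - 0 * bY b y) / (W x y)²))
  = d x * (W x y * f (bY b y / W x y)) + b x * f' (bY b y / W x y) * DY y.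
  move=> x y; rewrite (@rsum_ext _ _ (fun x' => W x' y * d x')); last by move=> i; ring.
  by rewrite /DY /Rsqr; have := hWpos x y; move=> hw; field; lra.
rewrite (rsum_ext (fun x => rsum_ext (pointwise x))).
rewrite (rsum_ext (fun x => rsumD _ _)) rsumD.
have out_terms : rsum (fun x => rsum (fun y => b x * f' (bY b y / W x y) * DY y)) =
                 rsum (fun x => d x * rsum (fun y => W x y * Psi_dout b y)).
  rewrite rsum_exch (rsum_ext (G := fun y => Psi_dout b y * DY y)); last first.
    by move=> y; rewrite /Psi_dout -rsumZr.
  rewrite (rsum_ext (G := fun y => rsum (fun x => Psi_dout b y * W x y * d x))); last first.
    by move=> y; rewrite /DY -rsumZ; apply: rsum_ext => x; ring.
  by rewrite rsum_exch; apply: rsum_ext => x; rewrite -rsumZ; apply: rsum_ext => y; ring.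
rewrite out_terms -rsumD; apply: rsum_ext => x.
by rewrite /Psi_grad rsumD rsumZ; ring.
Qed.

Lemma Psi_partial (b : X -> R) (x : X) l : (forall y, 0 < bY b y) ->
  derivable_pt_lim (fun t => Psi f W (upd1 b x t)) (b x) l -> l = Psi_grad b x.
Proof.
move=> hb D.
pose e := fun i : X => if i == x then 1 else 0.
have D2 := Psi_line_deriv b e (b x) hb.
have E : (fun t => Psi f W (line b e (b x) t)) = (fun t => Psi f W (upd1 b x t)).
  apply: functional_extensionality => t; congr Psi.
  apply: functional_extensionality => i; rewrite /line /upd1 /e.
  by case: eqP => [->|_]; ring.
by rewrite E in D2; rewrite (uniqueness_limite _ _ _ _ D D2) rsum_delta.
Qed.

End PsiGradient.

Section PhiGradient.
Context {S Sh : finType} (PS : S -> R) (hPSpos : forall s, 0 < PS s)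
  (f f' : R -> R) (Hf' : forall t, 0 < t -> derivable_pt_lim f t (f' t)).

Definition abar (a : S -> Sh -> R) (sh : Sh) : R := rsum (fun s' => a s' sh * PS s').
Definition ratio (a : S -> Sh -> R) (s : S) (sh : Sh) : R := abar a sh / a s sh.

Definition Phi_grad (a : S -> Sh -> R) (s : S) (sh : Sh) : R :=
  PS s * (f (ratio a s sh) - ratio a s sh * f' (ratio a s sh))
  + PS s * rsum (fun s'' => PS s'' * f' (ratio a s'' sh)).

(* The pairing of [Phi_grad a] with a direction [e], regrouped so that [e]
   enters through its own entries and its marginal [abar e]. *)
Lemma Phi_grad_pairing (a e : S -> Sh -> R) :
  rsum (fun s => rsum (fun sh => e s sh * Phi_grad a s sh)) =
  rsum (fun s => rsum (fun sh =>
    PS s * (e s sh * (f (ratio a s sh) - ratio a s sh * f' (ratio a s sh))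
            + f' (ratio a s sh) * abar e sh))).
Proof.
set g := fun s sh => f (ratio a s sh) - ratio a s sh * f' (ratio a s sh).
have lhs : forall s sh, e s sh * Phi_grad a s sh =
    PS s * (e s sh * g s sh)
    + e s sh * PS s * rsum (fun s'' => PS s'' * f' (ratio a s'' sh)).
  by move=> s sh; rewrite /Phi_grad /g; ring.
have rhs : forall s sh,
    PS s * (e s sh * g s sh + f' (ratio a s sh) * abar e sh) =
    PS s * (e s sh * g s sh) + PS s * f' (ratio a s sh) * abar e sh.
  by move=> s sh; ring.
rewrite (rsum_ext (fun s => rsum_ext (lhs s))) (rsum_ext (fun s => rsum_ext (rhs s))).
rewrite (rsum_ext (fun s => rsumD _ _)) rsumD.
rewrite [in RHS](rsum_ext (fun s => rsumD _ _)) [in RHS]rsumD.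
congr (_ + _).
rewrite rsum_exch [in RHS]rsum_exch; apply: rsum_ext => sh.
by rewrite rsumZr [in RHS]rsumZr /abar; ring.
Qed.

Lemma Phi_line_deriv (a d : S -> Sh -> R) t0 : (forall s sh, 0 < a s sh) ->
  derivable_pt_lim (fun t => Phi f PS (line2 a d t0 t)) t0
    (rsum (fun s => rsum (fun sh => d s sh * Phi_grad a s sh))).
Proof.
move=> ha; rewrite /Phi.
apply: derivable_pt_lim_eq.
  apply: derivable_pt_lim_rsum => s; apply: derivable_pt_lim_rsum => sh.
  apply: derivable_pt_lim_mult.
    apply: derivable_pt_lim_mult; first exact: derivable_pt_lim_affine.
    exact: derivable_pt_lim_const.
  apply: derivable_pt_lim_comp.
    apply: derivable_pt_lim_div.
        apply: derivable_pt_lim_rsum => s'.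
        apply: derivable_pt_lim_mult; first exact: derivable_pt_lim_affine.
        exact: derivable_pt_lim_const.
      exact: derivable_pt_lim_affine.
    by rewrite /= line2_at; exact: Rgt_not_eq.
  rewrite /= line2_at; apply: Hf'; apply: Rdiv_lt_0_compat; last exact: ha.
  apply: (rsum_pos s); first by move=> i; have := ha i sh; have := hPSpos i; nra.
  by have := ha s sh; have := hPSpos s; nra.
rewrite /= line2_at Phi_grad_pairing.
apply: rsum_ext => s; apply: rsum_ext => sh.
rewrite (@rsum_ext _ (fun s' => d s' sh * PS s' + a s' sh * 0) (fun s' => d s' sh * PS s'));
  last by move=> i; ring.
rewrite /ratio /Rsqr -/(abar d sh) -/(abar a sh).
by have := ha s sh; move=> h; field; lra.
Qed.

Lemma Phi_partial (a : S -> Sh -> R) s sh l : (forall s sh, 0 < a s sh) ->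
  derivable_pt_lim (fun t => Phi f PS (upd2 a s sh t)) (a s sh) l -> l = Phi_grad a s sh.
Proof.
move=> ha D.
pose e := fun (i : S) (j : Sh) => (if i == s then 1 else 0) * (if j == sh then 1 else 0).
have D2 := Phi_line_deriv a e (a s sh) ha.
have E : (fun t => Phi f PS (line2 a e (a s sh) t)) = (fun t => Phi f PS (upd2 a s sh t)).
  apply: functional_extensionality => t; congr Phi.
  apply: functional_extensionality => i; apply: functional_extensionality => j.
  rewrite /line2 /upd2 /e.
  by case: eqP => [->|_]; case: eqP => [->|_] /=; ring.
rewrite E in D2; rewrite (uniqueness_limite _ _ _ _ D D2).
rewrite (rsum_ext (G := fun i => (if i == s then 1 else 0) *
           rsum (fun j => (if j == sh then 1 else 0) * Phi_grad a i j))).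
  by rewrite !rsum_delta.
by move=> i; rewrite -rsumZ; apply: rsum_ext => j; rewrite /e; ring.
Qed.

End PhiGradient.

(** * The channel: [Psi] as an f-mutual information *)

Lemma xsum_fin (T : finType) (F : T -> R) : xsum (fun i => Fin (F i)) = Fin (rsum F).
Proof.
rewrite /xsum /rsum; apply/esym.
by rewrite (big_morph Fin (id1 := Fin 0) (op1 := xadd) (id2 := 0) (op2 := Rplus)).
Qed.

Lemma xsum_ext (T : finType) (F G : T -> xR) : (forall i, F i = G i) -> xsum F = xsum G.
Proof. by move=> H; rewrite /xsum; apply: eq_bigr => i _; exact: H. Qed.

Section Channel.
Context {X Y : finType} (W : X -> Y -> R) (hW : is_kernel W)
  (hWpos : forall x y, 0 < W x y) (f f' : R -> R)
  (Hf' : forall t, 0 < t -> derivable_pt_lim f t (f' t)).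

Lemma bY_pos (b : X -> R) : is_pmf b -> forall y, 0 < bY W b y.
Proof.
move=> pb y; have [x hx] := pmf_exists_pos pb.
apply: (rsum_pos x); first by move=> i; have := pb.1 i; have := hWpos i y; nra.
by have := hWpos x y; nra.
Qed.

Lemma If_channel (p : X -> R) : is_pmf p -> If f (fun u v => p u * W u v) = Fin (Psi f W p).
Proof.
move=> [p0 p1].
rewrite /If /Psi -xsum_fin; apply: xsum_ext => u.
rewrite -xsum_fin; apply: xsum_ext => v.
have -> : rsum (fun v0 => p u * W u v0) = p u by rewrite rsumZ hW.2; ring.
have -> : rsum (fun u0 => p u0 * W u0 v) = rsum (fun x' => W x' v * p x')
  by apply: rsum_ext => i; ring.
set B := rsum (fun x' => W x' v * p x').
have hw := hWpos u v.
case: (Rlt_dec 0 (p u * W u v)) => h.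
  have hp : 0 < p u by nra.
  by congr Fin; congr (_ * f _); field; lra.
have hp : p u = 0 by have := p0 u; nra.
case: (Rlt_dec 0 (p u * B)) => h2; first by exfalso; rewrite hp in h2; lra.
by rewrite /= hp; congr Fin; ring.
Qed.

(* The saddle property makes [Psi] concave on input distributions, so it lies
   below its first-order expansion at any [b]. *)
Lemma Psi_supergradient (b b' : X -> R) (dPsi : X -> R) :
  saddle_property f -> is_pmf b -> is_pmf b' ->
  (forall x, derivable_pt_lim (fun t => Psi f W (upd1 b x t)) (b x) (dPsi x)) ->
  Psi f W b' - Psi f W b <= rsum (fun x => b' x * dPsi x) - rsum (fun x => b x * dPsi x).
Proof.
move=> hsad pb pb' hdPsi.
have hbY := bY_pos b pb.
rewrite -rsumB (rsum_ext (G := fun x => (b' x - b x) * Psi_grad W f f' b x)); last first.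
  by move=> x; rewrite -(Psi_partial W hWpos f f' Hf' b x _ hbY (hdPsi x)); ring.
apply: (deriv_ge_of_slopes (g := fun h => Psi f W (line b (fun x => b' x - b x) 0 h))).
  exact: Psi_line_deriv.
move=> h hh; rewrite line_at.
have -> : line b (fun x => b' x - b x) 0 h = (fun u => h * b' u + (1 - h) * b u).
  by apply: functional_extensionality => u; rewrite /line; ring.
have pm : is_pmf (fun u => h * b' u + (1 - h) * b u).
  split; first by move=> u; have := pb.1 u; have := pb'.1 u; nra.
  by rewrite rsumD !rsumZ pb.2 pb'.2; ring.
have := hsad.2 X Y W hW b' b h pb' pb ltac:(lra).
by rewrite (If_channel _ pb') (If_channel _ pb) (If_channel _ pm) /=; lra.
Qed.

End Channel.

(** * The joint law [Q] and its marginals *)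

Section Model.
Context {S X Y Sh : finType} (PS : S -> R) (W : X -> Y -> R)
  (hPS : is_pmf PS) (hW : is_kernel W)
  (hPSpos : forall s, 0 < PS s) (hWpos : forall x y, 0 < W x y).

Section Marginals.
Context (QXS : S -> X -> R) (QSY : Y -> Sh -> R)
  (kXS : is_kernel QXS) (kSY : is_kernel QSY).

Definition aQ (s : S) (sh : Sh) : R :=
  rsum (fun x => rsum (fun y => Qjoint PS W QXS QSY s x y sh)) / PS s.
Definition bQ (x : X) : R :=
  rsum (fun s => rsum (fun y => rsum (fun sh => Qjoint PS W QXS QSY s x y sh))).

Lemma Qjoint_ge0 s x y sh : 0 <= Qjoint PS W QXS QSY s x y sh.
Proof.
rewrite /Qjoint; have := hPSpos s; have := hWpos x y.
have := kXS.1 s x; have := kSY.1 y sh.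
move=> h1 h2 h3 h4; repeat apply: Rmult_le_pos; lra.
Qed.

Lemma bQ_eq x : bQ x = rsum (fun s => PS s * QXS s x).
Proof.
apply: rsum_ext => s.
rewrite (rsum_ext (G := fun y => PS s * QXS s x * W x y)); last first.
  by move=> y; rewrite /Qjoint rsumZ kSY.2; ring.
by rewrite rsumZ hW.2; ring.
Qed.

Lemma bQ_pmf : is_pmf bQ.
Proof.
split.
  move=> x; rewrite bQ_eq; apply: rsum_ge0 => s.
  by have := hPSpos s; have := kXS.1 s x; nra.
rewrite (rsum_ext bQ_eq) rsum_exch -hPS.2; apply: rsum_ext => s.
by rewrite rsumZ kXS.2; ring.
Qed.

Lemma aQ_PS s sh :
  aQ s sh * PS s = rsum (fun x => rsum (fun y => Qjoint PS W QXS QSY s x y sh)).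
Proof. by rewrite /aQ; have := hPSpos s; move=> h; field; lra. Qed.

Lemma aQ_ge0 s sh : 0 <= aQ s sh.
Proof.
rewrite /aQ; apply: Rmult_le_pos; last by apply: Rlt_le; apply: Rinv_0_lt_compat.
by apply: rsum_ge0 => x; apply: rsum_ge0 => y; exact: Qjoint_ge0.
Qed.

Lemma aQ_sum s : rsum (fun sh => aQ s sh) = 1.
Proof.
rewrite /aQ rsumZr.
have -> : rsum (fun sh => rsum (fun x => rsum (fun y => Qjoint PS W QXS QSY s x y sh)))
          = PS s.
  rewrite rsum_exch (rsum_ext (G := fun x => PS s * QXS s x)); first by rewrite rsumZ kXS.2; ring.
  move=> x; rewrite rsum_exch (rsum_ext (G := fun y => PS s * QXS s x * W x y)).
    by rewrite rsumZ hW.2; ring.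
  by move=> y; rewrite /Qjoint rsumZ kSY.2; ring.
by have := hPSpos s; move=> h; field; lra.
Qed.

Lemma abar_aQ sh : abar PS aQ sh = rsum (fun y => bY W bQ y * QSY y sh).
Proof.
rewrite /abar (rsum_ext (fun s' => aQ_PS s' sh)) rsum_exch.
rewrite (rsum_ext (G := fun x => rsum (fun y => rsum (fun s' =>
           Qjoint PS W QXS QSY s' x y sh)))); last by move=> x; rewrite rsum_exch.
rewrite rsum_exch; apply: rsum_ext => y.
rewrite /bY -rsumZr; apply: rsum_ext => x.
rewrite bQ_eq -rsumZ -rsumZr; apply: rsum_ext => s.
by rewrite /Qjoint; ring.
Qed.

(* A reconstruction [sh] that is impossible from one source symbol is
   impossible altogether: every input reaches every output. *)
Lemma aQ_zero s sh : aQ s sh = 0 -> abar PS aQ sh = 0.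
Proof.
move=> E.
have E2 : rsum (fun x => rsum (fun y => Qjoint PS W QXS QSY s x y sh)) = 0
  by rewrite -aQ_PS E; ring.
have H1 := rsum_eq0 (fun x => rsum_ge0 (fun y => Qjoint_ge0 s x y sh)) E2.
have [x hx] := pmf_exists_pos (conj (kXS.1 s) (kXS.2 s)).
have H3 : forall y, QSY y sh = 0.
  move=> y; have := rsum_eq0 (fun y => Qjoint_ge0 s x y sh) (H1 x) y; rewrite /Qjoint.
  have hp : 0 < PS s * QXS s x * W x y.
    by have := hPSpos s; have := hWpos x y; move=> h1 h2; repeat apply: Rmult_lt_0_compat.
  by case/Rmult_integral => //; lra.
by rewrite abar_aQ -(@rsum0 Y); apply: rsum_ext => y; rewrite H3; ring.
Qed.

Lemma aQ_admissible s sh : admissible (aQ s sh) (abar PS aQ sh).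
Proof.
split; first exact: aQ_ge0; split; first exact: aQ_zero.
move=> hpos; apply: (rsum_pos s).
  by move=> i; have := aQ_ge0 i sh; have := hPSpos i; nra.
by have := hPSpos s; nra.
Qed.

Lemma objective_affine (lam mub : R) (mua : S -> R) (nub : X -> R)
    (dPhi : S -> Sh -> R) (dPsi : X -> R) :
  rsum (fun s => rsum (fun x => rsum (fun y => rsum (fun sh =>
    Qjoint PS W QXS QSY s x y sh *
      ((- (lam / PS s) * dPhi s sh + mua s) + (lam * dPsi x + mub + nub x)))))) =
  lam * (rsum (fun x => bQ x * dPsi x) - rsum (fun s => rsum (fun sh => aQ s sh * dPhi s sh)))
  + rsum (fun x => nub x * bQ x) + (rsum (fun s => PS s * mua s) + mub).
Proof.
set delta := fun s sh => - (lam / PS s) * dPhi s sh + mua s.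
set rho := fun x => lam * dPsi x + mub + nub x.
have split_terms : forall s,
    rsum (fun x => rsum (fun y => rsum (fun sh =>
      Qjoint PS W QXS QSY s x y sh * (delta s sh + rho x)))) =
    rsum (fun sh => aQ s sh * PS s * delta s sh) +
    rsum (fun x => rsum (fun y => rsum (fun sh => Qjoint PS W QXS QSY s x y sh * rho x))).
  move=> s.
  rewrite (rsum_ext (G := fun sh => rsum (fun x => rsum (fun y =>
             Qjoint PS W QXS QSY s x y sh * delta s sh)))); last first.
    by move=> sh; rewrite aQ_PS -rsumZr; apply: rsum_ext => x; rewrite -rsumZr.
  rewrite (rsum_exch Sh X) -rsumD; apply: rsum_ext => x.
  rewrite (rsum_exch Sh Y) -rsumD; apply: rsum_ext => y.
  by rewrite -rsumD; apply: rsum_ext => sh; ring.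
rewrite (rsum_ext split_terms) rsumD.
have source_part : rsum (fun s => rsum (fun sh => aQ s sh * PS s * delta s sh)) =
    - lam * rsum (fun s => rsum (fun sh => aQ s sh * dPhi s sh)) + rsum (fun s => PS s * mua s).
  rewrite -rsumZ -rsumD; apply: rsum_ext => s.
  rewrite -rsumZ -[PS s * mua s]Rmult_1_r -(aQ_sum s) -rsumZ -rsumD.
  by apply: rsum_ext => sh; rewrite /delta; have := hPSpos s; move=> h; field; lra.
have input_part : rsum (fun s => rsum (fun x => rsum (fun y => rsum (fun sh =>
                    Qjoint PS W QXS QSY s x y sh * rho x)))) =
    lam * rsum (fun x => bQ x * dPsi x) + mub + rsum (fun x => nub x * bQ x).
  rewrite rsum_exch.
  rewrite (rsum_ext (G := fun x => bQ x * rho x)); last first.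
    move=> x; rewrite /bQ -rsumZr; apply: rsum_ext => s.
    by rewrite -rsumZr; apply: rsum_ext => y; rewrite -rsumZr.
  rewrite -rsumZ -[mub]Rmult_1_r -bQ_pmf.2 -rsumZ -!rsumD.
  by apply: rsum_ext => x; rewrite /rho; ring.
by rewrite source_part input_part; ring.
Qed.

End Marginals.

Section Inequalities.
Context (f f' : R -> R) (hconv : convex_pos f)
  (Hf' : forall t, 0 < t -> derivable_pt_lim f t (f' t)).

(* [Phi] is a sum of perspectives of [f] in the pairs ([a(sh|s)], [abar sh]),
   which are linear in [a]; so [Phi] lies above its first-order expansion at
   a positive reconstruction kernel. *)
Lemma Phi_subgradient (QXS QXS' : S -> X -> R) (QSY QSY' : Y -> Sh -> R)
    (dPhi : S -> Sh -> R) :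
  is_kernel QXS -> is_kernel QSY -> is_kernel QXS' -> is_kernel QSY' ->
  (forall s sh, 0 < aQ QXS QSY s sh) ->
  (forall s sh, derivable_pt_lim (fun t => Phi f PS (upd2 (aQ QXS QSY) s sh t))
                  (aQ QXS QSY s sh) (dPhi s sh)) ->
  rsum (fun s => rsum (fun sh => aQ QXS' QSY' s sh * dPhi s sh))
  - rsum (fun s => rsum (fun sh => aQ QXS QSY s sh * dPhi s sh))
  <= Phi f PS (aQ QXS' QSY') - Phi f PS (aQ QXS QSY).
Proof.
move=> k1 k2 k3 k4 hapos hdPhi.
set a := aQ QXS QSY; set a' := aQ QXS' QSY'.
rewrite -rsumB (rsum_ext (G := fun s => rsum (fun sh =>
           (a' s sh - a s sh) * Phi_grad PS f f' a s sh))); last first.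
  move=> s; rewrite -rsumB; apply: rsum_ext => sh.
  by rewrite -(Phi_partial PS hPSpos f f' Hf' a s sh _ hapos (hdPhi s sh)); ring.
rewrite Phi_grad_pairing /Phi -rsumB; apply: rsum_le => s.
rewrite -rsumB; apply: rsum_le => sh.
have -> : abar PS (fun s sh => a' s sh - a s sh) sh = abar PS a' sh - abar PS a sh.
  by rewrite /abar -rsumB; apply: rsum_ext => i; ring.
have hM := (aQ_admissible QXS QSY k1 k2 s sh).2.2 (hapos s sh).
have := perspective_tangent f f' _ _ _ _ hconv Hf' (hapos s sh) hM (aQ_admissible _ _ k3 k4 s sh).
rewrite /ratio -/a -/a' -/(abar PS a sh) -/(abar PS a' sh) => tangent.
have := Rmult_le_compat_l _ _ _ (Rlt_le _ _ (hPSpos s)) tangent; lra.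
Qed.

Lemma Psi_bQ (QXS : S -> X -> R) (QSY : Y -> Sh -> R) :
  is_kernel QSY ->
  Psi f W (bQ QXS QSY) = rsum (fun s => rsum (fun sh => rsum (fun x => rsum (fun y =>
    Qjoint PS W QXS QSY s x y sh * f (bY W (bQ QXS QSY) y / W x y))))).
Proof.
move=> kSY; apply/esym.
rewrite (rsum_ext (G := fun s => rsum (fun x => rsum (fun y => rsum (fun sh =>
           Qjoint PS W QXS QSY s x y sh * f (bY W (bQ QXS QSY) y / W x y)))))); last first.
  by move=> s; rewrite rsum_exch; apply: rsum_ext => x; exact: rsum_exch.
rewrite /Psi rsum_exch; apply: rsum_ext => x; rewrite rsum_exch; apply: rsum_ext => y.
rewrite (bQ_eq _ _ kSY) -!rsumZr; apply: rsum_ext => s.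
rewrite (rsum_ext (G := fun sh => (PS s * QXS s x * W x y *
           f (bY W (bQ QXS QSY) y / W x y)) * QSY y sh)); last first.
  by move=> sh; rewrite /Qjoint; ring.
by rewrite rsumZ kSY.2 /bY; ring.
Qed.

(* Each term of [Phi] is bounded by Jensen's inequality over [(x, y)]. *)
Lemma data_processing (QXS : S -> X -> R) (QSY : Y -> Sh -> R) :
  is_kernel QXS -> is_kernel QSY ->
  Phi f PS (aQ QXS QSY) <= Psi f W (bQ QXS QSY).
Proof.
move=> kXS kSY.
set a := aQ QXS QSY; set b := bQ QXS QSY.
have hbY := bY_pos W hWpos b (bQ_pmf _ _ kXS kSY).
rewrite (Psi_bQ _ _ kSY) /Phi; apply: rsum_le => s; apply: rsum_le => sh.
rewrite rsum_pair.
have J := @jensen f _ (fun p : X * Y => Qjoint PS W QXS QSY s p.1 p.2 sh)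
            (fun p : X * Y => bY W b p.2 / W p.1 p.2) hconv
            (fun p => Qjoint_ge0 _ _ kXS kSY s p.1 p.2 sh)
            (fun p => Rdiv_lt_0_compat _ _ (hbY p.2) (hWpos p.1 p.2)).
have mass : rsum (fun p : X * Y => Qjoint PS W QXS QSY s p.1 p.2 sh) = a s sh * PS s.
  by rewrite -(rsum_pair _ _ (fun x y => Qjoint PS W QXS QSY s x y sh)) aQ_PS.
have moment : rsum (fun p : X * Y => Qjoint PS W QXS QSY s p.1 p.2 sh *
                                      (bY W b p.2 / W p.1 p.2))
              = PS s * abar PS a sh.
  rewrite -(rsum_pair _ _ (fun x y => Qjoint PS W QXS QSY s x y sh * (bY W b y / W x y))).
  rewrite (abar_aQ _ _ kSY).
  rewrite (rsum_ext (G := fun x => PS s * QXS s x *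
             rsum (fun y => bY W b y * QSY y sh))); last first.
    move=> x; rewrite -rsumZ; apply: rsum_ext => y.
    by rewrite /Qjoint; have := hWpos x y; move=> hw; field; lra.
  by rewrite rsumZr rsumZ kXS.2 Rmult_1_r.
rewrite mass moment in J; apply: Rle_trans _ J.
have hP := hPSpos s.
case: (Req_dec (a s sh) 0) => [-> | h0]; first lra.
have -> : PS s * abar PS a sh / (a s sh * PS s) = abar PS a sh / a s sh by field; lra.
exact: Req_le.
Qed.

End Inequalities.

End Model.

Theorem theorem4p1
  (S X Y Sh : finType)
  (hS : inhabited S) (hX : inhabited X) (hY : inhabited Y) (hSh : inhabited Sh)
  (PS : S -> R) (W : X -> Y -> R)
  (hPS : is_pmf PS) (hW : is_kernel W)
  (hPSpos : forall s, 0 < PS s) (hWpos : forall x y, 0 < W x y)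
  (f : R -> R) (hfC1 : C1_pos f) (hfsad : saddle_property f)
  (QXS : S -> X -> R) (QSY : Y -> Sh -> R)
  (hQXS : is_kernel QXS) (hQSY : is_kernel QSY)
  (a : S -> Sh -> R)
  (ha : forall s sh, a s sh =
          rsum (fun x => rsum (fun y => Qjoint PS W QXS QSY s x y sh)) / PS s)
  (b : X -> R)
  (hb : forall x, b x =
          rsum (fun s => rsum (fun y => rsum (fun sh => Qjoint PS W QXS QSY s x y sh))))
  (hapos : forall s sh, 0 < a s sh)
  (lam : R) (hlam : 0 <= lam)
  (hcs : lam * (Psi f W b - Phi f PS a) = 0)
  (mub : R) (mua : S -> R) (nub : X -> R)
  (hnub : forall x, 0 <= nub x) (hnubb : rsum (fun x => nub x * b x) = 0)
  (dPhi : S -> Sh -> R)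
  (hdPhi : forall s sh,
     derivable_pt_lim (fun t => Phi f PS (upd2 a s sh t)) (a s sh) (dPhi s sh))
  (dPsi : X -> R)
  (hdPsi : forall x,
     derivable_pt_lim (fun t => Psi f W (upd1 b x t)) (b x) (dPsi x)) :
  let delta := fun s sh => - (lam / PS s) * dPhi s sh + mua s in
  let rho := fun x => lam * dPsi x + mub + nub x in
  forall (QXS' : S -> X -> R) (QSY' : Y -> Sh -> R),
    is_kernel QXS' -> is_kernel QSY' ->
    rsum (fun s => rsum (fun x => rsum (fun y => rsum (fun sh =>
        Qjoint PS W QXS QSY s x y sh * (delta s sh + rho x)))))
    <=
    rsum (fun s => rsum (fun x => rsum (fun y => rsum (fun sh =>
        Qjoint PS W QXS' QSY' s x y sh * (delta s sh + rho x))))).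
Proof.
move=> delta rho QXS' QSY' hQXS' hQSY'.
have [f' Hf'] : exists f' : R -> R, forall t, 0 < t -> derivable_pt_lim f t (f' t).
  by have [f' H] := hfC1; exists f' => t /H [].
have Ea : a = aQ PS W QXS QSY.
  by do 2!apply: functional_extensionality => ?; rewrite ha.
have Eb : b = bQ PS W QXS QSY by apply: functional_extensionality => x; rewrite hb.
subst a b; rewrite /delta /rho !objective_affine //.
have pb := bQ_pmf PS W hPS hW hPSpos QXS QSY hQXS hQSY.
have pb' := bQ_pmf PS W hPS hW hPSpos QXS' QSY' hQXS' hQSY'.
(* The two objectives differ by lam ((<b', dPsi> - <b, dPsi>) - (<a', dPhi> - <a, dPhi>))
   + <nu, b'>; by the three inequalities and complementary slackness, lam
   times the bracket is at least lam (Psi(b') - Phi(a')) >= 0. *)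
have hPsi := Psi_supergradient W hW hWpos f f' Hf' _ _ dPsi hfsad pb pb' hdPsi.
have hPhi := Phi_subgradient PS W hW hPSpos hWpos f f' hfsad.1 Hf'
               _ _ _ _ dPhi hQXS hQSY hQXS' hQSY' hapos hdPhi.
have hDP := data_processing PS W hPS hW hPSpos hWpos f hfsad.1 _ _ hQXS' hQSY'.
have hN : 0 <= rsum (fun x => nub x * bQ PS W QXS' QSY' x).
  by apply: rsum_ge0 => x; have := hnub x; have := pb'.1 x; nra.
nra.
Qed.
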